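(* Let $\Delta=(\alpha_1,\dots,\alpha_N)$ be ordered and let $B$ be the associated set of bases (defined below). For $b=(\beta_1,\dots,\beta_r)\in B$, listed in increasing order of indices, consider the linear form $$\phi^b:=Res_{\beta_1}\circ Res_{\beta_2}\circ\cdots\circ Res_{\beta_r}:S_\Delta\to k,$$ where $Res_{\beta_r}$ is applied first and each subsequent $\beta_i$ denotes its image in the successive quotient space. Then $(\phi^b)_{b\in B}$ is the dual basis of $(\phi_b)_{b\in B}$: for all $b,b'\in B$, $$\phi^b(\phi_{b'})=1\ \text{if } b=b',\qquad \phi^b(\phi_{b'})=0\ \text{otherwise}.$$
   Context: Let $k$ be a field of characteristic zero. For a finite-dimensional $k$-vector space $W$ of dimension $d$ and a finite set $\Lambda\subset W$ of nonzero vectors spanning $W$, let $S_\Lambda$ be the $k$-span of the rational functions $\phi_\sigma=1/\prod_{\alpha\in\sigma}\alpha$ on $W^*$, for $\sigma\subset\Lambda$ a basis of $W$. For $W=0$, $\Lambda=\emptyset$, we have $S_\emptyset=k$. For $\alpha\in\Lambda$, let $\Lambda/\alpha$ be the image of $\Lambda\setminus k\alpha$ in $W/k\alpha$; it spans $W/k\alpha$. Every $\phi\in S_\Lambda$ has at most a simple pole along the hyperplane $\{\alpha=0\}\subset W^*$, which is identified with $(W/k\alpha)^*$. Define $Res_\alpha:S_\Lambda\to S_{\Lambda/\alpha}$ by $Res_\alpha(\phi)=(\alpha\phi)|_{\{\alpha=0\}}$. Now let $V$ be a $k$-vector space of dimension $r$ and $\Delta=(\alpha_1,\dots,\alpha_N)$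 an ordered finite set of nonzero vectors spanning $V$. $B$ is the set of ordered bases $b=(\alpha_{i_1},\dots,\alpha_{i_r})$, $i_1<\dots<i_r$, of $V$ with elements in $\Delta$, such that for every $j\notin\{i_1,\dots,i_r\}$ the set $\{\alpha_j\}\cup\{\alpha_{i_p}:i_p>j\}$ is linearly independent. It is known that $(\phi_b)_{b\in B}$ is a basis of $S_\Delta$. For $b=(\beta_1,\dots,\beta_r)$, the composite $Res_{\beta_1}\circ\cdots\circ Res_{\beta_r}$ means: first $Res_{\beta_r}:S_\Delta\to S_{\Delta/\beta_r}$, then $Res$ along the image of $\beta_{r-1}$ in $V/k\beta_r$, and so on, ending in $S_\emptyset=k$. *)

From HB Require Import structures.
From mathcomp Require Import all_boot all_order all_algebra.
From mathcomp Require Import mpoly fraction.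
From Stdlib Require Import ClassicalEpsilon.

Set Implicit Arguments.
Unset Strict Implicit.
Unset Printing Implicit Defensive.

Import Order.TTheory GRing.Theory Num.Theory.
Notation "x %:F" := (@FracField.tofrac _ x) : ring_scope.
Local Open Scope ring_scope.

(* A d-dimensional k-vector space W is 'rV[k]_d.  Polynomial
   functions on W^* = k^d are {mpoly k[d]} (coordinates 'X_i), so a vector
   alpha in W is the linear form  lin alpha = sum_i alpha_i 'X_i  on W^*.
   Rational functions on W^* form the fraction field {fraction {mpoly k[d]}}.
   A quotient W -> W' (w |-> w *m p, p : 'M_(d,d')) induces the pullback
   W'^* -> W^* and the restriction of polynomial functions
   Sym(W) -> Sym(W'), 'X_i |-> lin (row i p).                                 *)

Section Defs.
Variable k : fieldType.

Definition lin (d : nat) (a : 'rV[k]_d) : {mpoly k[d]} :=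
  \sum_(i < d) a 0 i *: 'X_i.

Definition prestr (d d' : nat) (p : 'M[k]_(d, d')) (P : {mpoly k[d]})
  : {mpoly k[d']} :=
  P \mPo [tuple lin (row i p) | i < d].

(* restriction of a rational function along p (defined when the function has
   no pole along the subspace; the value is then independent of the chosen
   representation P/Q with restricted denominator nonzero; junk 0 otherwise) *)
Definition frestr (d d' : nat) (p : 'M[k]_(d, d'))
  (f : {fraction {mpoly k[d]}}) : {fraction {mpoly k[d']}} :=
  epsilon (inhabits 0) (fun g => exists P Q : {mpoly k[d]},
    [/\ prestr p Q != 0, f = P%:F / Q%:F &
        g = (prestr p P)%:F / (prestr p Q)%:F]).

Definition is_quot (d d' : nat) (a : 'rV[k]_d) (p : 'M[k]_(d, d')) : bool :=
  (kermx p == a)%MS && row_full p.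

Definition qmap (d : nat) (a : 'rV[k]_d) : 'M[k]_(d, d.-1) :=
  epsilon (inhabits 0) (fun p => is_quot a p).

Definition Res (d : nat) (a : 'rV[k]_d) (f : {fraction {mpoly k[d]}})
  : {fraction {mpoly k[d.-1]}} :=
  frestr (qmap a) ((lin a)%:F * f).

(* S_empty = k : value of a (constant) rational function in 0 variables *)
Definition cval (f : {fraction {mpoly k[0]}}) : k :=
  epsilon (inhabits 0) (fun c => f = (c%:MP)%:F).

(* iterated residue Res_{b_1} o ... o Res_{b_m}: Res along the LAST vector
   is applied first, then the remaining vectors are pushed to the quotient. *)
Fixpoint ires (n d : nat) (bs : seq 'rV[k]_d) (f : {fraction {mpoly k[d]}})
  {struct n} : k :=
  match n with
  | 0 => match d as d0 return {fraction {mpoly k[d0]}} -> k with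
         | 0 => fun f0 => cval f0
         | _.+1 => fun _ => 0
         end f
  | n'.+1 =>
      let a := last 0 bs in
      ires n' [seq v *m qmap a | v <- take (size bs).-1 bs] (Res a f)
  end.

Definition phi (d : nat) (s : seq 'rV[k]_d) : {fraction {mpoly k[d]}} :=
  ((\prod_(a <- s) lin a)%:F)^-1.

Definition inB (r : nat) (D : seq 'rV[k]_r) (b : seq nat) : bool :=
  [&& sorted ltn b, all (fun i => (i < size D)%N) b,
      basis_of fullv [seq D`_i | i <- b] &
      all (fun j => (j \in b) ||
             free (D`_j :: [seq D`_i | i <- b & (j < i)%N])) (iota 0 (size D))].

Definition phiup (r : nat) (D : seq 'rV[k]_r) (b : seq nat)
  (f : {fraction {mpoly k[r]}}) : k :=
  ires (size b) [seq D`_i | i <- b] f.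

Definition phib (r : nat) (D : seq 'rV[k]_r) (b : seq nat)
  : {fraction {mpoly k[r]}} := phi [seq D`_i | i <- b].

End Defs.

From HB Require Import structures.
From mathcomp Require Import all_boot all_order all_algebra.
From mathcomp Require Import mpoly fraction.
From Stdlib Require Import ClassicalEpsilon.

Set Implicit Arguments.
Unset Strict Implicit.
Unset Printing Implicit Defensive.

Import GRing.Theory.
Local Open Scope ring_scope.

(* Res_a (phi_s) can be computed outright.  If a occurs in s, the factor a
   cancels and Res_a (phi_s) = phi_s', where s' lists the images in W / k a of
   the other vectors; if instead no vector of s is proportional to a, nothing
   vanishes on the hyperplane a = 0 except the numerator a, and
   Res_a (phi_s) = 0.  Peel off the last vector beta_r of b.  For b = b' the
   remaining vectors stay free in the quotient, so phi^b (phi_b) = 1 by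
   induction on r.  For b <> b', either beta_r is not in b', and the
   independence conditions defining B forbid any vector of b' to be
   proportional to beta_r, so the residue is 0; or both b and b' lose beta_r
   and the shortened pair in W / k beta_r again satisfies those conditions. *)

Lemma rem_filter_comm (T : eqType) (P : pred T) x (s : seq T) :
  rem x (filter P s) = filter P (rem x s).
Proof.
elim: s => //= y s IH; case: (eqVneq y x) => [->|ne]; case Py: (P _) => /=.
- by rewrite eqxx.
- by rewrite rem_id // mem_filter Py.
- by rewrite (negPf ne) Py IH.
- by rewrite Py IH.
Qed.

Lemma sorted_rcons_ltn s x : sorted ltn (rcons s x) -> all (fun y => y < x)%N s.
Proof.
elim: s => //= y s IH so.
have := order_path_min ltn_trans so; rewrite all_rcons => /andP[-> _].
exact/IH/(path_sorted so).
Qed.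

Lemma sorted_ltn_subset_eq (b b' : seq nat) :
  sorted ltn b -> sorted ltn b' -> (size b' <= size b)%N -> {subset b <= b'} ->
  b = b'.
Proof.
move=> so so' sz sub.
have [_ eqbb'] := uniq_min_size (sorted_uniq ltn_trans ltnn so) sub sz.
exact: irr_sorted_eq ltn_trans ltnn _ _ so so' eqbb'.
Qed.

Section Linear.
Variable k : fieldType.

Lemma free_cons_head_scale d (u v : 'rV[k]_d) s x :
  free (u :: s) -> v \in s -> u <> x *: v.
Proof.
by rewrite free_cons => /andP[hu _] vs e; move: hu; rewrite e memvZ // memv_span.
Qed.

Lemma free_cons_tail_scale d (u v : 'rV[k]_d) s x :
  free (u :: s) -> v \in s -> v <> x *: u.
Proof.
move=> fr vs e; have [x0|x0] := eqVneq x 0.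
  move: fr; rewrite free_cons => /andP[_ /free_not0 /(_ vs)].
  by rewrite e x0 scale0r eqxx.
by apply: (free_cons_head_scale (x := x^-1) fr vs); rewrite e scalerA mulVf ?scale1r.
Qed.

Lemma mulmx_eq0_line d d' (a w : 'rV[k]_d) (p : 'M[k]_(d, d')) :
  (kermx p <= a)%MS -> w *m p = 0 -> exists x, w = x *: a.
Proof.
by move=> kerp /eqP; rewrite -sub_kermx => /submx_trans/(_ kerp)/sub_rVP.
Qed.

Lemma free_map_mulmx d d' (a : 'rV[k]_d) (p : 'M[k]_(d, d')) vs :
  (kermx p <= a)%MS -> free (a :: vs) -> free [seq v *m p | v <- vs].
Proof.
move=> kerp; elim: vs => [|v vs IH] fr; first by rewrite nil_free.
have fr_va : free (v :: a :: vs).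
  by rewrite (perm_free (permEl (perm_catCA [:: v] [:: a] vs))).
have fr_a : free (a :: vs) by move: fr_va; rewrite free_cons => /andP[].
rewrite /= free_cons IH // andbT; apply/negP => vp_span.
pose X := in_tuple [seq v *m p | v <- vs].
have e := coord_span (X := X) vp_span.
have sizeX (i : 'I_(size X)) : (i < size vs)%N by rewrite -(size_map (mulmx^~ p)).
pose w := \sum_(i < size X) coord X i (v *m p) *: vs`_i.
have ew : w *m p = v *m p.
  rewrite e /w mulmx_suml; apply: eq_bigr => i _.
  by rewrite -scalemxAl (nth_map 0).
have [x ex] : exists x, v - w = x *: a.
  by apply: (mulmx_eq0_line kerp); rewrite mulmxBl ew subrr.
move: fr_va; rewrite free_cons => /andP[/negP v_notin _]; apply: v_notin.
rewrite -(subrK w v) ex; apply: rpredD.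
  by apply/memvZ/memv_span/mem_head.
apply: rpred_sum => i _; apply/memvZ/memv_span.
by rewrite inE mem_nth ?orbT.
Qed.

End Linear.

Section Residues.
Variable k : fieldType.

Lemma lin0 d : lin (0 : 'rV[k]_d) = 0.
Proof. by rewrite /lin big1 // => i _; rewrite mxE scale0r. Qed.

Lemma lin_eq0 d (v : 'rV[k]_d) : (lin v == 0) = (v == 0).
Proof.
apply/eqP/eqP => [lin_v0|->]; last exact: lin0.
apply/rowP => j; rewrite mxE.
have := congr1 (mcoeff U_(j)%MM) lin_v0; rewrite mcoeff0 /lin raddf_sum /=.
rewrite (bigD1 j) //= big1 ?addr0 => [|i ij].
  by rewrite mcoeffZ mcoeffX eqxx mulr1.
rewrite mcoeffZ mcoeffX; case: eqP => [e|]; last by rewrite mulr0.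
by have := congr1 (fun m : 'X_{1..d} => m i) e; rewrite !mnm1E eqxx eq_sym (negPf ij).
Qed.

Lemma prestr_lin d d' (p : 'M[k]_(d, d')) (v : 'rV[k]_d) :
  prestr p (lin v) = lin (v *m p).
Proof.
rewrite /prestr /lin raddf_sum /=.
under eq_bigr => i _ do
  rewrite comp_mpolyZ comp_mpolyXU -tnth_nth tnth_map tnth_ord_tuple /lin raddf_sum.
rewrite exchange_big /=; apply: eq_bigr => j _.
by rewrite !mxE scaler_suml; apply: eq_bigr => i _; rewrite mxE scalerA.
Qed.

Lemma prestr_prod_lin d d' (p : 'M[k]_(d, d')) (s : seq 'rV[k]_d) :
  prestr p (\prod_(v <- s) lin v) = \prod_(v <- s) lin (v *m p).
Proof. by rewrite /prestr rmorph_prod; apply: eq_bigr => v _; apply: prestr_lin. Qed.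

Lemma frestrE d d' (p : 'M[k]_(d, d')) (P Q : {mpoly k[d]}) :
  prestr p Q != 0 ->
  frestr p (P%:F / Q%:F) = (prestr p P)%:F / (prestr p Q)%:F.
Proof.
move=> pQ0; rewrite /frestr; set S := (fun g => _).
have : exists g, S g by exists ((prestr p P)%:F / (prestr p Q)%:F); exists P, Q.
move=> /(epsilon_spec (inhabits 0)) [P' [Q' [pQ'0 e ->]]].
have nzF (R : {mpoly k[d]}) : prestr p R != 0 -> R%:F != 0.
  by apply: contraNneq => /eqP; rewrite tofrac_eq0 => /eqP ->; rewrite /prestr raddf0.
have cross : P * Q' = P' * Q.
  by apply/eqP; rewrite -tofrac_eq !tofracM -(eqr_div _ _ (nzF _ pQ0) (nzF _ pQ'0)) e.
have prestrM R1 R2 : prestr p (R1 * R2) = prestr p R1 * prestr p R2.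
  by rewrite /prestr rmorphM.
have pcross := congr1 (fun R => (prestr p R)%:F) cross.
rewrite /= !prestrM !tofracM in pcross.
by apply/eqP; rewrite eqr_div ?tofrac_eq0 // pcross.
Qed.

Lemma frestr0 d d' (p : 'M[k]_(d, d')) : frestr p 0 = 0.
Proof.
have -> : 0 = (0 : {mpoly k[d]})%:F / (1 : {mpoly k[d]})%:F by rewrite tofrac0 mul0r.
by rewrite frestrE /prestr ?rmorph1 ?oner_neq0 // raddf0 tofrac0 mul0r.
Qed.

Lemma frestr_lin_phi_cons d d' (p : 'M[k]_(d, d')) (a : 'rV[k]_d) s :
  a != 0 -> (forall v, v \in s -> v *m p != 0) ->
  frestr p ((lin a)%:F * phi (a :: s)) = phi [seq v *m p | v <- s].
Proof.
move=> a0 sp_nz; rewrite /phi big_cons tofracM invfM mulrA.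
rewrite divff ?tofrac_eq0 ?lin_eq0 // mul1r -[X in frestr p X]mul1r -tofrac1.
rewrite frestrE prestr_prod_lin.
  by rewrite big_map /prestr rmorph1 tofrac1 mul1r.
by rewrite prodf_seq_neq0; apply/allP => v /sp_nz; rewrite lin_eq0.
Qed.

Lemma frestr_lin_phi_eq0 d d' (p : 'M[k]_(d, d')) (a : 'rV[k]_d) s :
  a *m p = 0 -> (forall v, v \in s -> v *m p != 0) ->
  frestr p ((lin a)%:F * phi s) = 0.
Proof.
move=> ap sp_nz; rewrite /phi frestrE.
  by rewrite prestr_lin ap lin0 tofrac0 mul0r.
by rewrite prestr_prod_lin prodf_seq_neq0; apply/allP => v /sp_nz; rewrite lin_eq0.
Qed.

Lemma cvalE (c : k) : cval ((c%:MP : {mpoly k[0]})%:F) = c.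
Proof.
rewrite /cval; set S := (fun _ => _).
have /(epsilon_spec (inhabits 0)) : exists c', S c' by exists c.
by rewrite /S => /eqP; rewrite tofrac_eq mpolyC_eq => /eqP.
Qed.

Lemma ires0 n d (bs : seq 'rV[k]_d) : ires n bs 0 = 0.
Proof.
elim: n d bs => [|n IH] [|d] bs //=; rewrite ?/Res ?mulr0 ?frestr0 ?IH //.
by rewrite -(cvalE 0) tofrac0.
Qed.

Lemma ires_rcons n d (bs : seq 'rV[k]_d) a f :
  ires n.+1 (rcons bs a) f = ires n [seq v *m qmap a | v <- bs] (Res a f).
Proof. by rewrite /= last_rcons size_rcons -cats1 take_size_cat. Qed.

Lemma exists_quot n (a : 'rV[k]_n.+1) : a != 0 -> exists p, @is_quot k _ n a p.
Proof.
move=> a0; set A := cokermx a.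
have rA : \rank A = n by rewrite mxrank_coker rank_rV a0 subn1.
suff quot_base m (E : \rank A = m) : is_quot a (castmx (erefl, E) (col_base A)).
  by exists (castmx (erefl, rA) (col_base A)).
case: m / E; rewrite castmx_id /is_quot col_base_full andbT.
have a_ker : (a <= kermx (col_base A))%MS.
  rewrite sub_kermx; apply/eqP/(row_free_inj (row_base_free A)).
  by rewrite mul0mx -mulmxA mulmx_base mulmx_coker.
have rK : \rank (kermx (col_base A)) = 1%N.
  by rewrite mxrank_ker (eqP (col_base_full A)) rA subSnn.
by have := mxrank_leqif_eq a_ker; rewrite rK rank_rV a0 => /leqif_refl/andP[-> ->].
Qed.

Lemma kermx_qmap n (a : 'rV[k]_n.+1) : a != 0 -> (kermx (qmap a) == a)%MS.
Proof.
move=> /exists_quot quot_a.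
by case/andP: (epsilon_spec (inhabits 0) _ quot_a).
Qed.

Lemma kermx_qmap_sub n (a : 'rV[k]_n.+1) : a != 0 -> (kermx (qmap a) <= a)%MS.
Proof. by move/kermx_qmap/andP => []. Qed.

Lemma mulmx_qmap_eq0 n (a : 'rV[k]_n.+1) : a != 0 -> a *m qmap a = 0.
Proof. by move/kermx_qmap/andP => [_]; rewrite sub_kermx => /eqP. Qed.

Lemma ires_phi_free n (bs : seq 'rV[k]_n) :
  size bs = n -> free bs -> ires n bs (phi bs) = 1.
Proof.
elim: n bs => [|n IH] bs sz fr.
  move/size0nil: sz => ->; rewrite /= /phi big_nil tofrac1 invr1.
  by rewrite -(cvalE 1) mpolyC1 tofrac1.
case/lastP: bs sz fr => [|bs a] //; rewrite size_rcons => -[sz].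
rewrite (perm_free (permEl (perm_rcons a bs))) => fr.
have a0 : a != 0 by apply: (free_not0 fr); apply: mem_head.
have fr_p := free_map_mulmx (kermx_qmap_sub a0) fr.
rewrite ires_rcons /Res /phi (perm_big _ (permEl (perm_rcons a bs))) -/(phi _).
rewrite frestr_lin_phi_cons ?IH ?size_map // => v vbs.
by apply: (free_not0 fr_p); apply: map_f.
Qed.

Definition free_above d (D : seq 'rV[k]_d) (b : seq nat) (j : nat) : bool :=
  free (D`_j :: [seq D`_i | i <- b & (j < i)%N]).

Lemma nth_mulmx d d' (D : seq 'rV[k]_d) (p : 'M[k]_(d, d')) i :
  [seq v *m p | v <- D]`_i = D`_i *m p.
Proof.
have [iD|Di] := ltnP i (size D); first by rewrite (nth_map 0).
by rewrite !nth_default ?size_map ?mul0mx.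
Qed.

Lemma map_nth_mulmx d d' (D : seq 'rV[k]_d) (p : 'M[k]_(d, d')) (c : seq nat) :
  [seq v *m p | v <- [seq D`_i | i <- c]] = [seq [seq v *m p | v <- D]`_i | i <- c].
Proof. by rewrite -map_comp; apply: eq_map => i; rewrite /= nth_mulmx. Qed.

Lemma notin_line_last d (D : seq 'rV[k]_d) b0 ir b' :
  free (D`_ir :: [seq D`_i | i <- b0]) -> ir \notin b' ->
  {in b', forall j, j \notin rcons b0 ir -> free_above D (rcons b0 ir) j} ->
  {in rcons b0 ir, forall j, j \notin b' -> free_above D b' j} ->
  {in b', forall j x, D`_j <> x *: D`_ir}.
Proof.
move=> fr irb' ab ab' j jb' x ej.
have irb : ir \in rcons b0 ir by rewrite mem_rcons mem_head.
case: (ltngtP ir j) => [irj|jir|irj].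
- apply: (free_cons_tail_scale (ab' ir irb irb') _ ej).
  by apply: map_f; rewrite mem_filter irj.
- have [jb0|jb0] := boolP (j \in b0).
    by apply: (free_cons_tail_scale fr _ ej); apply: map_f.
  have jb : j \notin rcons b0 ir by rewrite mem_rcons inE negb_or jb0 ltn_eqF.
  apply: (free_cons_head_scale (ab j jb' jb) _ ej).
  by apply: map_f; rewrite mem_filter jir irb.
- by move: irb'; rewrite irj jb'.
Qed.

Section QuotientTransfer.
Variables (d d' : nat) (D : seq 'rV[k]_d) (p : 'M[k]_(d, d')).
Variables (b0 b' : seq nat) (ir : nat).
Hypothesis kerp : (kermx p <= D`_ir)%MS.
Hypothesis so : sorted ltn (rcons b0 ir).
Hypothesis ub' : uniq b'.

Let D' := [seq v *m p | v <- D].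

Lemma free_above_rcons_quot :
  free [seq D'`_i | i <- rem ir b'] ->
  {in b', forall j, j \notin rcons b0 ir -> free_above D (rcons b0 ir) j} ->
  {in rem ir b', forall j, j \notin b0 -> free_above D' b0 j}.
Proof.
move=> fr_rem ab j jrem jb0.
have := jrem; rewrite mem_rem_uniq // inE => /andP[jir jb'].
have jb : j \notin rcons b0 ir by rewrite mem_rcons inE negb_or jir.
have := ab j jb' jb; rewrite /free_above filter_rcons.
case: ltnP => [j_lt|ir_le].
  rewrite map_rcons -cats1 -cat_cons (perm_free (permEl (perm_catC _ [:: _]))).
  by move=> /(free_map_mulmx kerp); rewrite /= map_nth_mulmx nth_mulmx.
have -> : [seq i <- b0 | (j < i)%N] = [::].
  rewrite (eq_in_filter (a2 := pred0)) ?filter_pred0 // => i.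
  move=> /(allP (sorted_rcons_ltn so)) i_lt /=; apply/negbTE.
  by rewrite -leqNgt (leq_trans (ltnW i_lt) ir_le).
by move=> _; rewrite seq1_free; apply: (free_not0 fr_rem); apply: map_f.
Qed.

Lemma free_above_rem_quot : ir \in b' ->
  {in rcons b0 ir, forall j, j \notin b' -> free_above D b' j} ->
  {in b0, forall j, j \notin rem ir b' -> free_above D' (rem ir b') j}.
Proof.
move=> irb' ab' j jb0; have jir := allP (sorted_rcons_ltn so) j jb0.
rewrite mem_rem_uniq // inE negb_and negbK (ltn_eqF jir) /= => jb'.
have jb : j \in rcons b0 ir by rewrite mem_rcons inE jb0 orbT.
have ir_above : ir \in [seq i <- b' | (j < i)%N] by rewrite mem_filter jir.
have /(perm_map (fun i => D`_i)) perm_ir := perm_to_rem ir_above.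
rewrite -(perm_cons D`_j) in perm_ir.
have := ab' j jb jb'; rewrite /free_above (perm_free perm_ir) /=.
rewrite (perm_free (permEl (perm_catCA [:: _] [:: _] _))) => /(free_map_mulmx kerp).
by rewrite /= nth_mulmx map_nth_mulmx rem_filter_comm.
Qed.

End QuotientTransfer.

Lemma ires_phi_eq0 n (D : seq 'rV[k]_n) (b b' : seq nat) :
  size b = n -> sorted ltn b -> uniq b' ->
  free [seq D`_i | i <- b] -> free [seq D`_i | i <- b'] ->
  {in b', forall j, j \notin b -> free_above D b j} ->
  {in b, forall j, j \notin b' -> free_above D b' j} ->
  has (predC (mem b')) b ->
  ires n [seq D`_i | i <- b] (phi [seq D`_i | i <- b']) = 0.
Proof.
elim: n D b b' => [|n IH] D b b' + so ub' fr fr'.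
  by move/size0nil => ->.
case/lastP: b so fr => [//|b0 ir] so fr; rewrite size_rcons => -[sz] ab ab' b_out.
rewrite map_rcons ires_rcons /Res.
rewrite map_rcons (perm_free (permEl (perm_rcons _ _))) in fr.
have a0 : D`_ir != 0 by apply: (free_not0 fr); apply: mem_head.
have kerp := kermx_qmap_sub a0.
have [irb'|irb'] := boolP (ir \in b'); last first.
  rewrite frestr_lin_phi_eq0 ?ires0 ?mulmx_qmap_eq0 // => _ /mapP[j jb' ->].
  by apply/eqP => /(mulmx_eq0_line kerp)[x]; exact: (notin_line_last fr irb' ab ab' jb').
have perm_b' := perm_map (fun i => D`_i) (perm_to_rem irb').
rewrite (perm_free perm_b') in fr'.
have fr'_p := free_map_mulmx kerp fr'.
rewrite /phi (perm_big _ perm_b') -/(phi _) frestr_lin_phi_cons //; last first.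
  by move=> v v_rem; apply: (free_not0 fr'_p); apply: map_f.
rewrite !map_nth_mulmx; apply: IH => //.
- by move: so; rewrite -cats1 => /cat_sorted2[].
- exact: rem_uniq.
- by rewrite -map_nth_mulmx; apply: free_map_mulmx kerp fr.
- by rewrite -map_nth_mulmx.
- by apply: free_above_rcons_quot; rewrite -?map_nth_mulmx.
- exact: free_above_rem_quot.
case/hasP: b_out => j; rewrite mem_rcons inE /= => /orP[/eqP->|jb0 jb'].
  by rewrite irb'.
by apply/hasP; exists j => //=; apply: contra jb'; apply: mem_rem.
Qed.

Lemma inB_sorted r (D : seq 'rV[k]_r) b : inB D b -> sorted ltn b.
Proof. by case/and4P. Qed.

Lemma inB_free r (D : seq 'rV[k]_r) b : inB D b -> free [seq D`_i | i <- b].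
Proof. by case/and4P => _ _ /basis_free. Qed.

Lemma inB_size r (D : seq 'rV[k]_r) b : inB D b -> size b = r.
Proof.
case/and4P => _ _ basis_b _.
have := @vector.size_basis _ _ fullv _ (in_tuple [seq D`_i | i <- b]) basis_b.
by rewrite dimvf /dim /= mul1n size_map.
Qed.

Lemma inB_free_above r (D : seq 'rV[k]_r) b b' :
  inB D b -> inB D b' -> {in b', forall j, j \notin b -> free_above D b j}.
Proof.
case/and4P => _ _ _ /allP above_b /and4P[_ /allP b'_lt _ _] j jb' jb.
by have := above_b j; rewrite mem_iota add0n b'_lt //= (negPf jb); apply.
Qed.

End Residues.

Theorem mainTheorem10 (k : fieldType) (Hchar : [pchar k] =i pred0)
  (r : nat) (D : seq 'rV[k]_r)
  (Huniq : uniq D) (Hnz : all (fun a => a != 0) D)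
  (Hspan : (<<D>> = fullv)%VS)
  (b b' : seq nat) (Hb : inB D b) (Hb' : inB D b') :
  phiup D b (phib D b') = (if b == b' then 1 else 0).
Proof.
rewrite /phiup /phib (inB_size Hb); have [<-|neq_bb'] := eqVneq b b'.
  by apply: ires_phi_free; [rewrite size_map (inB_size Hb) | exact: inB_free Hb].
apply: ires_phi_eq0 (inB_size Hb) (inB_sorted Hb) _ (inB_free Hb) (inB_free Hb')
  (inB_free_above Hb Hb') (inB_free_above Hb' Hb) _.
  exact: sorted_uniq ltn_trans ltnn _ (inB_sorted Hb').
apply/hasPn => b_sub; move/eqP: neq_bb'; apply.
apply: sorted_ltn_subset_eq (inB_sorted Hb) (inB_sorted Hb') _ _.
  by rewrite (inB_size Hb) (inB_size Hb').
by move=> x /b_sub /negPn.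
Qed.
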